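(* Let $\Omega$ be a set endowed with a well-order $\le^*$, and let a group $G$ act faithfully on $\Omega$ preserving a total order $\le$ on $\Omega$. Then there exists a left-ordering of $G$ for which the pointwise stabilizer $G_{\Omega_0}$ of every initial segment $\Omega_0$ of $(\Omega,\le^* )$ is convex. Moreover, if the action has no crossings, this left-ordering is Conradian.
   Context: A left-ordering is a total order on $G$ invariant under left multiplication; a subgroup $H$ is convex if $f_1\prec h\prec f_2$ with $f_1,f_2\in H$ implies $h\in H$; a left-ordering is Conradian if for all $f\succ id$, $g\succ id$ there is $n\in\mathbb{N}$ with $fg^n\succ g$. A crossing for the action on $(\Omega,\le)$ is a 5-tuple $(f,g,u,v,w)$, $f,g\in G$, $u,v,w\in\Omega$, with $u<w<v$; $g^nu<v$ and $f^nv>u$ for all $n\in\mathbb{N}$; and $f^Nv<w<g^Mu$ for some $M,N\in\mathbb{N}$. *)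

Set Implicit Arguments.

Record Group := {
  carrier :> Type;
  gmul : carrier -> carrier -> carrier;
  gid : carrier;
  ginv : carrier -> carrier;
  gmul_assoc : forall a b c, gmul a (gmul b c) = gmul (gmul a b) c;
  gid_l : forall a, gmul gid a = a;
  gid_r : forall a, gmul a gid = a;
  ginv_l : forall a, gmul (ginv a) a = gid;
  ginv_r : forall a, gmul a (ginv a) = gid
}.

Arguments gmul {G} : rename.
Arguments gid {G} : rename.
Arguments ginv {G} : rename.

Fixpoint gpow {G : Group} (g : G) (n : nat) : G :=
  match n with O => gid | S k => gmul g (gpow g k) end.

Definition total_order {T : Type} (le : T -> T -> Prop) : Prop :=
  (forall x, le x x) /\
  (forall x y, le x y -> le y x -> x = y) /\
  (forall x y z, le x y -> le y z -> le x z) /\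
  (forall x y, le x y \/ le y x).

Definition well_order {T : Type} (le : T -> T -> Prop) : Prop :=
  total_order le /\
  (forall P : T -> Prop, (exists x, P x) ->
     exists m, P m /\ forall x, P x -> le m x).

Definition is_action (G : Group) (Omega : Type) (act : G -> Omega -> Omega) : Prop :=
  (forall x, act gid x = x) /\
  (forall g h x, act (gmul g h) x = act g (act h x)).

Definition faithful (G : Group) (Omega : Type) (act : G -> Omega -> Omega) : Prop :=
  forall g, (forall x, act g x = x) -> g = gid.

Definition order_preserving (G : Group) (Omega : Type) (act : G -> Omega -> Omega)
  (le : Omega -> Omega -> Prop) : Prop :=
  forall g x y, le x y -> le (act g x) (act g y).

Definition left_ordering (G : Group) (prec : G -> G -> Prop) : Prop :=
  (forall f, ~ prec f f) /\
  (forall f g h, prec f g -> prec g h -> prec f h) /\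
  (forall f g, prec f g \/ f = g \/ prec g f) /\
  (forall f g h, prec f g -> prec (gmul h f) (gmul h g)).

Definition convex (G : Group) (prec : G -> G -> Prop) (H : G -> Prop) : Prop :=
  forall f1 h f2, H f1 -> H f2 -> prec f1 h -> prec h f2 -> H h.

Definition conradian (G : Group) (prec : G -> G -> Prop) : Prop :=
  forall f g, prec gid f -> prec gid g ->
    exists n : nat, 1 <= n /\ prec g (gmul f (gpow g n)).

Definition initial_segment {Omega : Type} (le_star : Omega -> Omega -> Prop)
  (O0 : Omega -> Prop) : Prop :=
  forall x y, O0 y -> le_star x y -> O0 x.

Definition pointwise_stabilizer (G : Group) (Omega : Type)
  (act : G -> Omega -> Omega) (O0 : Omega -> Prop) : G -> Prop :=
  fun g => forall x, O0 x -> act g x = x.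

Definition crossing (G : Group) (Omega : Type) (act : G -> Omega -> Omega)
  (le : Omega -> Omega -> Prop) (f g : G) (u v w : Omega) : Prop :=
  let lt := fun a b => le a b /\ a <> b in
  lt u w /\ lt w v /\
  (forall n : nat, lt (act (gpow g n) u) v /\ lt u (act (gpow f n) v)) /\
  (exists M N : nat, lt (act (gpow f N) v) w /\ lt w (act (gpow g M) u)).

Definition no_crossings (G : Group) (Omega : Type) (act : G -> Omega -> Omega)
  (le : Omega -> Omega -> Prop) : Prop :=
  forall f g u v w, ~ @crossing G Omega act le f g u v w.

From Stdlib Require Import Classical Lia.

(* Order G by looking at the leading point of an element, the [le_star]-least
   point it moves: [k] is positive when it moves its leading point upwards.
   For a product of two positive elements the leading point is the smaller of
   the two leading points and it is still moved upwards, so the positive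
   elements form a positive cone.  If [h] lies between two elements of the
   stabilizer of an initial segment but moves some point of it, both quotients
   have their leading points in the segment, and so does their product, which
   lies in the stabilizer: contradiction.  Finally, for positive [f], [g] with
   leading points [p], [q]: if [p] is below [q], then [g] fixes [p] and
   [g^-1 f g] is positive with leading point [p]; otherwise, if [f g^n] never
   exceeds [g], the whole [g]-orbit of [q] stays below [f^-1 (g q)], and this
   is a crossing. *)

Set Implicit Arguments.
Unset Strict Implicit.

Section GroupFacts.
Variable G : Group.
Implicit Types a b f g h : G.

Lemma ginv_unique a b : gmul a b = gid -> b = ginv a.
Proof.
  intro H. rewrite <- (gid_l G b), <- (ginv_l G a), <- gmul_assoc, H, gid_r.
  reflexivity.
Qed.

Lemma ginv_ginv a : ginv (ginv a) = a.
Proof. symmetry. apply ginv_unique, ginv_l. Qed.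

Lemma ginv_gid : ginv (@gid G) = gid.
Proof. symmetry. apply ginv_unique, gid_l. Qed.

Lemma ginv_mul a b : ginv (gmul a b) = gmul (ginv b) (ginv a).
Proof.
  symmetry. apply ginv_unique.
  rewrite <- gmul_assoc, (gmul_assoc _ b), ginv_r, gid_l, ginv_r. reflexivity.
Qed.

Lemma ginv_quotient f g : ginv (gmul (ginv f) g) = gmul (ginv g) f.
Proof. rewrite ginv_mul, ginv_ginv. reflexivity. Qed.

Lemma quotient_eq_gid f g : gmul (ginv f) g = gid -> f = g.
Proof. intro H. apply ginv_unique in H. rewrite ginv_ginv in H. auto. Qed.

Lemma quotient_mul_quotient f g h :
  gmul (gmul (ginv f) g) (gmul (ginv g) h) = gmul (ginv f) h.
Proof. rewrite <- gmul_assoc, (gmul_assoc _ g), ginv_r, gid_l. reflexivity. Qed.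

Lemma quotient_mul_l h f g :
  gmul (ginv (gmul h f)) (gmul h g) = gmul (ginv f) g.
Proof.
  rewrite ginv_mul, <- gmul_assoc, (gmul_assoc _ (ginv h)), ginv_l, gid_l.
  reflexivity.
Qed.

Lemma gpow_one g : gpow g 1 = g.
Proof. apply gid_r. Qed.

Lemma gpow_S_r g n : gpow g (S n) = gmul (gpow g n) g.
Proof.
  induction n as [|n IH]; simpl.
  - rewrite gid_r, gid_l. reflexivity.
  - simpl in IH. rewrite IH, gmul_assoc, IH. reflexivity.
Qed.

End GroupFacts.

Section PositiveCone.
Variable G : Group.
Variable P : G -> Prop.
Hypothesis P_gid : ~ P gid.
Hypothesis P_mul : forall h k, P h -> P k -> P (gmul h k).
Hypothesis P_total : forall k, k <> gid -> P k \/ P (ginv k).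

Lemma cone_left_ordering : left_ordering G (fun f g => P (gmul (ginv f) g)).
Proof.
  split; [|split; [|split]].
  - intro f. rewrite ginv_l. exact P_gid.
  - intros f g h Hfg Hgh. rewrite <- (quotient_mul_quotient f g h). auto.
  - intros f g. destruct (classic (f = g)) as [<- | Hne]; auto.
    assert (Hq : gmul (ginv f) g <> gid) by (intro E; apply Hne, quotient_eq_gid, E).
    destruct (P_total Hq) as [H | H]; auto.
    rewrite ginv_quotient in H. auto.
  - intros f g h H. rewrite quotient_mul_l. exact H.
Qed.

End PositiveCone.

Section TotalOrder.
Variables (T : Type) (le : T -> T -> Prop).
Hypothesis Hto : total_order le.

Definition strict (x y : T) := le x y /\ x <> y.

Lemma total_le_refl x : le x x.
Proof. apply (proj1 Hto). Qed.

Lemma total_le_antisym x y : le x y -> le y x -> x = y.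
Proof. apply (proj1 (proj2 Hto)). Qed.

Lemma total_le_trans x y z : le x y -> le y z -> le x z.
Proof. apply (proj1 (proj2 (proj2 Hto))). Qed.

Lemma total_le_total x y : le x y \/ le y x.
Proof. apply (proj2 (proj2 (proj2 Hto))). Qed.

Lemma le_strict_trans x y z : le x y -> strict y z -> strict x z.
Proof.
  intros Hxy [Hyz Hne]. split; [eapply total_le_trans; eauto|].
  intros ->. apply Hne, total_le_antisym; auto.
Qed.

Lemma strict_le_trans x y z : strict x y -> le y z -> strict x z.
Proof.
  intros [Hxy Hne] Hyz. split; [eapply total_le_trans; eauto|].
  intros ->. apply Hne, total_le_antisym; auto.
Qed.

Lemma strict_trans x y z : strict x y -> strict y z -> strict x z.
Proof. intros Hxy [Hyz _]. eapply strict_le_trans; eauto. Qed.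

Lemma not_strict_le x y : ~ strict x y -> le y x.
Proof.
  intro H. destruct (total_le_total y x) as [|Hxy]; auto.
  destruct (classic (x = y)) as [<- | Hne]; [apply total_le_refl|].
  exfalso. apply H. split; auto.
Qed.

Lemma strict_trichotomy x y : x = y \/ strict x y \/ strict y x.
Proof.
  destruct (classic (x = y)) as [|Hne]; auto.
  destruct (total_le_total x y); [right; left | right; right]; split; auto.
Qed.

End TotalOrder.

Section OrderedAction.
Variables (G : Group) (Omega : Type) (le_star le : Omega -> Omega -> Prop).
Variable act : G -> Omega -> Omega.
Hypothesis Hws : well_order le_star.
Hypothesis Hto : total_order le.
Hypothesis Hact : is_action G act.
Hypothesis Hfa : faithful G act.
Hypothesis Hop : order_preserving G act le.

Lemma act_id x : act gid x = x.
Proof. apply (proj1 Hact). Qed.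

Lemma act_mul g h x : act (gmul g h) x = act g (act h x).
Proof. apply (proj2 Hact). Qed.

Lemma act_inv_l g x : act (ginv g) (act g x) = x.
Proof. rewrite <- act_mul, ginv_l, act_id. reflexivity. Qed.

Lemma act_inv_r g x : act g (act (ginv g) x) = x.
Proof. rewrite <- act_mul, ginv_r, act_id. reflexivity. Qed.

Lemma act_inj g x y : act g x = act g y -> x = y.
Proof. intro H. rewrite <- (act_inv_l g x), H, act_inv_l. reflexivity. Qed.

Lemma act_quotient_fixed f g x :
  act (gmul (ginv f) g) x = x <-> act g x = act f x.
Proof.
  rewrite act_mul. split; intro H.
  - apply (f_equal (act f)) in H. rewrite act_inv_r in H. exact H.
  - rewrite H. apply act_inv_l.
Qed.

Lemma strict_act g x y : strict le x y -> strict le (act g x) (act g y).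
Proof.
  intros [Hxy Hne]. split; [apply Hop, Hxy|].
  intro E. apply Hne. eapply act_inj; eauto.
Qed.

Lemma gpow_fixed g n y : act g y = y -> act (gpow g n) y = y.
Proof.
  intro H. induction n as [|n IH]; simpl.
  - apply act_id.
  - rewrite act_mul, IH. exact H.
Qed.

Lemma orbit_le f q : le q (act f q) -> forall n, le q (act (gpow f n) q).
Proof.
  intros H n. induction n as [|n IH]; simpl.
  - rewrite act_id. apply (total_le_refl Hto).
  - rewrite act_mul. eapply (total_le_trans Hto); [exact H | apply Hop, IH].
Qed.

Lemma orbit_strict_incr g q n : strict le q (act g q) ->
  strict le (act (gpow g n) q) (act (gpow g (S n)) q).
Proof. intro H. rewrite gpow_S_r, act_mul. apply strict_act, H. Qed.

Definition leading_point (k : G) (m : Omega) :=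
  act k m <> m /\ forall y, strict le_star y m -> act k y = y.

Definition positive (k : G) :=
  exists m, leading_point k m /\ strict le m (act k m).

Lemma leading_point_exists k : k <> gid -> exists m, leading_point k m.
Proof.
  intro Hk.
  assert (Hmoved : exists x, act k x <> x).
  { apply NNPP. intro Hn. apply Hk, Hfa. intro x.
    apply NNPP. intro Hx. apply Hn. exists x. exact Hx. }
  destruct (proj2 Hws _ Hmoved) as [m [Hm Hmin]].
  exists m. split; [exact Hm|].
  intros y [Hym Hne]. apply NNPP. intro Hy.
  apply Hne, (total_le_antisym (proj1 Hws)); auto.
Qed.

Lemma leading_point_min k m x : leading_point k m -> act k x <> x -> le_star m x.
Proof.
  intros [_ Hfix] Hx. apply (not_strict_le (proj1 Hws)).
  intro Hxm. apply Hx, Hfix, Hxm.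
Qed.

Lemma leading_point_inv k m : leading_point k m -> leading_point (ginv k) m.
Proof.
  intros [Hm Hfix]. split.
  - intro E. apply Hm. rewrite <- E at 1. apply act_inv_r.
  - intros y Hy. rewrite <- (Hfix y Hy) at 1. apply act_inv_l.
Qed.

Lemma leading_point_mul h k a b :
  leading_point h a -> strict le a (act h a) ->
  leading_point k b -> strict le b (act k b) ->
  exists m, (m = a \/ m = b) /\
    leading_point (gmul h k) m /\ strict le m (act (gmul h k) m).
Proof.
  intros [_ Ha_fix] Ha [_ Hb_fix] Hb.
  assert (Hfix : forall m y, strict le_star m a -> strict le_star m b ->
            strict le_star y m -> act (gmul h k) y = y).
  { intros m y Hma Hmb Hym. rewrite act_mul, Hb_fix, Ha_fix; auto;
      eapply (strict_trans (proj1 Hws)); eauto. }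
  assert (Hlead : forall m, strict le m (act (gmul h k) m) ->
            (forall y, strict le_star y m -> act (gmul h k) y = y) ->
            leading_point (gmul h k) m /\ strict le m (act (gmul h k) m)).
  { intros m Hm Hm_fix. split; [split|]; auto. intro E. apply (proj2 Hm). auto. }
  destruct (strict_trichotomy (proj1 Hws) a b) as [<- | [Hab | Hba]].
  - exists a. split; auto. apply Hlead.
    + rewrite act_mul. eapply (strict_trans Hto); [exact Ha | apply strict_act, Hb].
    + intros y Hy. rewrite act_mul, Hb_fix, Ha_fix; auto.
  - exists a. split; auto. apply Hlead.
    + rewrite act_mul, (Hb_fix a Hab). exact Ha.
    + intros y Hy. rewrite act_mul, Hb_fix, Ha_fix; auto.
      eapply (strict_trans (proj1 Hws)); eauto.
  - exists b. split; auto. apply Hlead.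
    + rewrite act_mul. rewrite <- (Ha_fix b Hba) at 1. apply strict_act, Hb.
    + intros y Hy. rewrite act_mul, Hb_fix, Ha_fix; auto.
      eapply (strict_trans (proj1 Hws)); eauto.
Qed.

Lemma not_positive_gid : ~ positive gid.
Proof. intros [m [[Hm _] _]]. apply Hm, act_id. Qed.

Lemma positive_mul h k : positive h -> positive k -> positive (gmul h k).
Proof.
  intros [a [Ha Ha']] [b [Hb Hb']].
  destruct (leading_point_mul Ha Ha' Hb Hb') as [m [_ Hm]]. exists m. exact Hm.
Qed.

Lemma positive_total k : k <> gid -> positive k \/ positive (ginv k).
Proof.
  intro Hk. destruct (leading_point_exists Hk) as [m Hm].
  destruct (total_le_total Hto m (act k m)) as [Hup | Hdown].
  - left. exists m. split; [exact Hm|]. split; [exact Hup|].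
    intro E. apply (proj1 Hm). auto.
  - right. exists m. split; [apply leading_point_inv, Hm|].
    assert (Hkm : strict le (act k m) m) by (split; [exact Hdown | apply Hm]).
    apply (strict_act (ginv k)) in Hkm. rewrite act_inv_l in Hkm. exact Hkm.
Qed.

Lemma leading_point_in_segment O0 k m x : initial_segment le_star O0 ->
  leading_point k m -> O0 x -> act k x <> x -> O0 m.
Proof. intros HO Hm Hx Hkx. eapply HO; [exact Hx | eapply leading_point_min; eauto]. Qed.

Lemma pointwise_stabilizer_convex O0 : initial_segment le_star O0 ->
  convex G (fun f g => positive (gmul (ginv f) g)) (pointwise_stabilizer G act O0).
Proof.
  intros HO f1 h f2 Hf1 Hf2 [m1 [Hm1 Hm1']] [m2 [Hm2 Hm2']] x Hx.
  apply NNPP. intro Hhx.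
  assert (O0 m1).
  { apply (leading_point_in_segment HO Hm1 Hx).
    rewrite act_quotient_fixed, (Hf1 x Hx). exact Hhx. }
  assert (O0 m2).
  { apply (leading_point_in_segment HO Hm2 Hx).
    rewrite act_quotient_fixed, (Hf2 x Hx). auto. }
  destruct (leading_point_mul Hm1 Hm1' Hm2 Hm2') as [m [Hm [[Hmoved _] _]]].
  assert (Hm0 : O0 m) by (destruct Hm as [-> | ->]; assumption).
  apply Hmoved. rewrite quotient_mul_quotient, act_quotient_fixed, (Hf1 m Hm0).
  exact (Hf2 m Hm0).
Qed.

Lemma positive_conj_pow f g m n :
  (forall y, strict le_star y m -> act f y = y /\ act g y = y) ->
  strict le (act g m) (act f (act (gpow g n) m)) ->
  positive (gmul (ginv g) (gmul f (gpow g n))).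
Proof.
  intros Hfix Hm.
  assert (Hup : strict le m (act (gmul (ginv g) (gmul f (gpow g n))) m)).
  { rewrite !act_mul. apply (strict_act (ginv g)) in Hm.
    rewrite act_inv_l in Hm. exact Hm. }
  exists m. split; [split|]; auto.
  - intro E. apply (proj2 Hup). auto.
  - intros y Hy. destruct (Hfix y Hy) as [Hfy Hgy].
    rewrite !act_mul, gpow_fixed, Hfy by exact Hgy.
    rewrite <- Hgy at 1. apply act_inv_l.
Qed.

Lemma crossing_of_bounded_orbit f g q :
  le q (act f q) -> strict le q (act g q) ->
  (forall n, strict le (act f (act (gpow g n) q)) (act g q)) ->
  crossing G act le f g q (act (ginv f) (act g q)) (act (gpow g 2) q).
Proof.
  intros Hfq Hgq Hbound.
  assert (Hbelow : forall n, strict le (act (gpow g n) q) (act (ginv f) (act g q))).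
  { intro n. pose proof (strict_act (ginv f) (Hbound n)) as H.
    rewrite act_inv_l in H. exact H. }
  assert (Hq_below : strict le q (act (ginv f) (act g q))).
  { pose proof (Hbelow 0) as H. simpl in H. rewrite act_id in H. exact H. }
  assert (Hincr : forall n, strict le (act (gpow g n) q) (act (gpow g (S n)) q))
    by (intro n; apply orbit_strict_incr, Hgq).
  split; [|split; [|split]].
  - eapply (strict_trans Hto); [exact Hgq|].
    rewrite <- (gpow_one g) at 1. apply Hincr.
  - apply Hbelow.
  - intro n. split; [apply Hbelow|].
    eapply (le_strict_trans Hto); [apply orbit_le, Hfq | apply strict_act, Hq_below].
  - exists 3, 1. split; [|apply Hincr].
    assert (Hv : act (gpow f 1) (act (ginv f) (act g q)) = act (gpow g 1) q)
      by (rewrite !gpow_one; apply act_inv_r).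
    pose proof (Hincr 1) as H. rewrite <- Hv in H. exact H.
Qed.

Lemma no_crossings_escape f g q : no_crossings G act le ->
  le q (act f q) -> strict le q (act g q) ->
  exists n, 1 <= n /\ strict le (act g q) (act f (act (gpow g n) q)).
Proof.
  intros Hnc Hfq Hgq. apply NNPP. intro Hno.
  assert (Hle : forall n, 1 <= n -> le (act f (act (gpow g n) q)) (act g q)).
  { intros n Hn. apply (not_strict_le Hto). intro H. apply Hno. eauto. }
  apply (Hnc f g q (act (ginv f) (act g q)) (act (gpow g 2) q)).
  apply crossing_of_bounded_orbit; auto.
  intro n. eapply (strict_le_trans Hto).
  - apply strict_act, orbit_strict_incr, Hgq.
  - apply Hle. lia.
Qed.

Lemma positive_conradian : no_crossings G act le ->
  conradian G (fun f g => positive (gmul (ginv f) g)).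
Proof.
  intros Hnc f g Hf Hg. rewrite ginv_gid, gid_l in Hf, Hg.
  destruct Hf as [p [[_ Hp_fix] Hp]], Hg as [q [[_ Hq_fix] Hq]].
  destruct (classic (strict le_star p q)) as [Hpq | Hqp].
  - exists 1. split; [lia|]. apply positive_conj_pow with p.
    + intros y Hy. split; [auto|].
      apply Hq_fix. eapply (strict_trans (proj1 Hws)); eauto.
    + rewrite gpow_one, (Hq_fix p Hpq). exact Hp.
  - apply (not_strict_le (proj1 Hws)) in Hqp.
    assert (Hfix : forall y, strict le_star y q -> act f y = y /\ act g y = y).
    { intros y Hy. split; auto. apply Hp_fix. eapply (strict_le_trans (proj1 Hws)); eauto. }
    assert (Hfq : le q (act f q)).
    { destruct (classic (q = p)) as [-> | Hne]; [apply Hp|].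
      rewrite Hp_fix by (split; auto). apply (total_le_refl Hto). }
    destruct (no_crossings_escape Hnc Hfq Hq) as [n [Hn Hesc]].
    exists n. split; [exact Hn|]. eapply positive_conj_pow; eauto.
Qed.

End OrderedAction.

Theorem mainTheorem18 (G : Group) (Omega : Type)
  (le_star : Omega -> Omega -> Prop) (le : Omega -> Omega -> Prop)
  (act : G -> Omega -> Omega) :
  well_order le_star ->
  total_order le ->
  @is_action G Omega act ->
  @faithful G Omega act ->
  @order_preserving G Omega act le ->
  exists prec : G -> G -> Prop,
    @left_ordering G prec /\
    (forall O0 : Omega -> Prop, initial_segment le_star O0 ->
       @convex G prec (@pointwise_stabilizer G Omega act O0)) /\
    (@no_crossings G Omega act le -> @conradian G prec).
Proof.
  intros Hws Hto Hact Hfa Hop.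
  exists (fun f g => positive le_star le act (gmul (ginv f) g)).
  split; [|split].
  - apply cone_left_ordering.
    + apply not_positive_gid; assumption.
    + intros h k. apply positive_mul; assumption.
    + intro k. apply positive_total; assumption.
  - intros O0 HO. apply pointwise_stabilizer_convex; assumption.
  - apply positive_conradian; assumption.
Qed.
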